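(* Let $e_i$ be the idempotent of a projection $K[G^{(l)}]\to K_i$ and fix $\varepsilon_{k_0}\otimes\chi_0\in I_i$. Then for every $\varepsilon_k\otimes\chi\in I_i$ there exists $s\in\hat{\mathbb Z}^\times=\varprojlim_n(\mathbb Z/n\mathbb Z)^\times\cong\mathrm{Aut}(\mathbb Q/\mathbb Z)$ such that, after suitably renumbering the $\alpha^\chi_j$ and the $\beta^\chi_j$, \[ s\Big(\tfrac{k_0}{l}+\alpha^{\chi_0}_j\Big)=\tfrac kl+\alpha^\chi_j,\qquad s\Big(\tfrac{k_0}{l}+\beta^{\chi_0}_j\Big)=\tfrac kl+\beta^\chi_j\quad\text{in }\mathbb Q/\mathbb Z,\ j=1,2. \]
   Context: Setting. Fix an embedding $\overline{\mathbb Q}\subset\mathbb C$. Let $f\colon X\to\mathbb P^1$ be a surjective morphism over $\overline{\mathbb Q}$ from a smooth projective variety $X$, with a fixed coordinate $t$ on $\mathbb P^1$, such that $f$ is smooth over $S:=\mathbb P^1\setminus\{0,1,\infty\}$. Let $K$ be a number field with a ring homomorphism from $K$ to the endomorphisms of the variation of Hodge structure $R^1f_*\mathbb Q$ over a nonempty Zariski open set (a relative multiplication), such that (a) $R^1f_*\mathbb Q$ has rank $2$ over $K$, and (c) the local monodromy at $t=1$ on $H^1_B(X_t,\mathbb Q)$ ($X_t$ a general fiber) is unipotent and $N=\log T_1$ has rank $\frac12\dim_{\mathbb Q}H^1_B(X_t,\mathbb Q)$. For a $\overline{\mathbb Q}$- or $\mathbb C$-vector space $V$ with $K$-action and an embedding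 $\chi\colon K\hookrightarrow\overline{\mathbb Q}$, $V^\chi=\{v:av=\chi(a)v\ \forall a\in K\}$. For each $\chi$, $H^1_B(X_t,\overline{\mathbb Q})^\chi$ is $2$-dimensional; the eigenvalues of the local monodromy $T_0$ at $t=0$ (counterclockwise) on it are $e^{2\pi i\alpha^\chi_1},e^{2\pi i\alpha^\chi_2}$ and those of $T_\infty$ are $e^{2\pi i\beta^\chi_1},e^{2\pi i\beta^\chi_2}$, with $\alpha^\chi_j,\beta^\chi_j\in\mathbb Q$ determined modulo $\mathbb Z$. For an integer $l\ge1$ let $\pi\colon\mathbb P^1\to\mathbb P^1$, $t\mapsto t^l$, let $X^{(l)}$ be a desingularization of $X\times_{\mathbb P^1,\pi}\mathbb P^1$ with induced $f^{(l)}\colon X^{(l)}\to\mathbb P^1$, and $G^{(l)}=\mathrm{Aut}(\pi)\cong\mu_l$ acting by $\tau_\zeta(t)=\zeta t$. Write $K[G^{(l)}]\cong\prod_iK_i$ with $K_i$ fields and $e_i$ the idempotent of the projection to $K_i$. For $k\in\mathbb Z/l\mathbb Z$ let $\varepsilon_k\colon\mathbb Q[G^{(l)}]\to\overline{\mathbb Q}$, $\varepsilon_k(\tau_\zeta)=\zeta^k$; algebra homomorphisms $K[G^{(l)}]\to\overline{\mathbb Q}$ are exactly $\varepsilon_k\otimes\chi$, and $I_i$ denotes the set of those factoring through $K_i$. Let $\mathcal M^{(l)}:=\pi_*\mathbb Q\otimes R^1f_*\mathbb Q\cong\pi_*R^1f^{(l)}_*\mathbb Q$ on $S$ (with multiplication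 by $K[G^{(l)}]$). On the $\varepsilon_k\otimes\chi$-part of $\mathcal M^{(l)}$ the eigenvalues of $T_0$ are $\exp 2\pi i(k/l+\alpha^\chi_j)$ and of $T_\infty$ are $\exp2\pi i(-k/l+\beta^\chi_j)$. *)

From HB Require Import structures.
From mathcomp Require Import all_boot all_order all_algebra all_fingroup all_field.
Set Implicit Arguments. Unset Strict Implicit. Unset Printing Implicit Defensive.
Import Order.TTheory GRing.Theory Num.Theory.
Local Open Scope ring_scope.

(* algC models Qbar with a fixed embedding into C.
   expi q = exp(2 pi i q) for q : rat.  For d >= 1, d.-root (-1) is the
   d-th root of -1 with minimal nonnegative argument, i.e. exp(pi i/d). *)
Definition expi (q : rat) : algC :=
  (((`|denq q|%N).-root (-1 : algC)) ^+ 2) ^ (numq q).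

Definition eqQZ (p q : rat) : Prop := (p - q) \is a Num.int.

(* An element of Zhat^x = lim (Z/nZ)^x, given by a compatible family of
   representatives s n of units mod n (n > 0). *)
Definition zhat_unit (s : nat -> int) : Prop :=
  (forall n : nat, (0 < n)%N -> coprimez (s n) n) /\
  (forall m n : nat, (0 < n)%N -> (0 < m)%N -> (n %| m)%N ->
      (s m == s n %[mod n])%Z).

Definition zhat_act (s : nat -> int) (q : rat) : rat :=
  ((s `|denq q|%N * numq q)%:~R) / (denq q)%:~R.

(* The algebra homomorphism eps_k (x) chi : K[G^(l)] -> Qbar, where
   K[G^(l)] is modelled as functions 'I_l -> K, with g : 'I_l standing for
   tau_zeta, zeta = exp(2 pi i g / l); eps_k(tau_zeta) = zeta^k. *)
Definition eps_chi (K : fieldExtType rat) (l : nat) (k : 'I_l)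
  (chi : {rmorphism K -> algC}) (x : {ffun 'I_l -> K}) : algC :=
  \sum_(g < l) chi (x g) * expi ((g * k)%:R / l%:R).

(* Two algebra homomorphisms K[G] -> Qbar factor through the same field
   factor K_i of K[G] = prod K_i iff they have the same kernel. *)
Definition same_factor (K : fieldExtType rat) (l : nat)
  (phi psi : {ffun 'I_l -> K} -> algC) : Prop :=
  forall x, phi x = 0 <-> psi x = 0.

(* V = Q^n as row vectors, K acting on the right via rho.  The chi-part
   V^chi of V (x) Qbar is 2-dimensional with basis the rows of B, T (acting on
   the right) preserves it and its eigenvalues there, with multiplicity, are
   exp(2 pi i a_0), exp(2 pi i a_1). *)
Definition eigen_exps (K : fieldExtType rat) (n : nat)
  (rho : {rmorphism K -> 'M[rat]_n}) (chi : {rmorphism K -> algC})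
  (T : 'M[rat]_n) (a : 'I_2 -> rat) : Prop :=
  exists (B : 'M[algC]_(2, n)) (A : 'M[algC]_2),
    [/\ forall v : 'rV[algC]_n,
          (v <= B)%MS <-> (forall x : K, v *m map_mx ratr (rho x) = chi x *: v),
        row_free B,
        B *m map_mx ratr T = A *m B &
        char_poly A = \prod_(j < 2) ('X - (expi (a j))%:P)].

Definition logU (n : nat) (T : 'M[rat]_n) : 'M[rat]_n :=
  \sum_(1 <= k < n.+1) (((-1) ^+ k.+1) / k%:R) *: (T - 1%:M) ^+ k.

(* Since the two characters [eps_k0 (x) chi0] and [eps_k (x) chi] of [K[G^(l)]] have the same
   kernel, [eps_k0 (x) chi0 (y) |-> eps_k (x) chi (y)] is a ring isomorphism of number fields,
   and it extends to an automorphism [nu] of [Qbar] with [nu o chi0 = chi] and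
   [nu (exp (2 pi i k0 / l)) = exp (2 pi i k / l)].  Applying [nu] to the [chi0]-eigenspace of
   [T0] (resp. [Tinf]) gives the [chi]-eigenspace, so [nu] permutes the eigenvalues.  On roots
   of unity [nu] acts through a compatible family of exponents, i.e. an [s] in [Zhat^x], with
   [nu (exp (2 pi i q)) = exp (2 pi i s q)]; as [q |-> exp (2 pi i q)] is injective on [Q/Z],
   the identities between eigenvalues become the claimed identities in [Q/Z].
   Most of the work is to identify [d.-root (-1)] with [exp (pi i / d)]: it is the [2d]-th
   root of unity of smallest positive argument, whose powers run monotonically along the
   upper half circle. *)

From HB Require Import structures.
From mathcomp Require Import all_boot all_order all_algebra all_fingroup all_field.
From mathcomp Require Import ring lra.
Set Implicit Arguments. Unset Strict Implicit. Unset Printing Implicit Defensive.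
Import Order.TTheory GRing.Theory Num.Theory.
Local Open Scope ring_scope.

(** * Real and imaginary parts on the unit circle *)

(* Valued in the real closed field [algR], so that [lra] and [nra] apply. *)
Definition reR (z : algC) : algR := in_algR (Creal_Re z).
Definition imR (z : algC) : algR := in_algR (Creal_Im z).

Definition upper (z : algC) : bool := (0 : algR) <= imR z.

Lemma reRM x y : reR (x * y) = reR x * reR y - imR x * imR y.
Proof. by apply: val_inj; rewrite /= ReM. Qed.
Lemma imRM x y : imR (x * y) = reR x * imR y + reR y * imR x.
Proof. by apply: val_inj; rewrite /= ImM. Qed.
Lemma reRN x : reR (- x) = - reR x.
Proof. by apply: val_inj; rewrite /= raddfN. Qed.
Lemma imRN x : imR (- x) = - imR x.
Proof. by apply: val_inj; rewrite /= raddfN. Qed.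
Lemma reR1 : reR 1 = 1.
Proof. by apply: val_inj; rewrite /= (Creal_ReP _ _) ?rpred1. Qed.
Lemma imR1 : imR 1 = 0.
Proof. by apply: val_inj; rewrite /=; apply/Creal_ImP; rewrite rpred1. Qed.
Lemma reRJ x : reR x^* = reR x.
Proof. by apply: val_inj; rewrite /= Re_conj. Qed.
Lemma imRJ x : imR x^* = - imR x.
Proof. by apply: val_inj; rewrite /= Im_conj. Qed.

Lemma reR_imR_inj x y : reR x = reR y -> imR x = imR y -> x = y.
Proof.
move=> /(congr1 val) /= eq_re /(congr1 val) /= eq_im.
by rewrite [x]Crect [y]Crect eq_re eq_im.
Qed.

Lemma normC1_reR_imR z : `|z| = 1 -> reR z ^+ 2 + imR z ^+ 2 = 1.
Proof. by move=> z1; apply: val_inj; rewrite /= -normC2_Re_Im z1 expr1n. Qed.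

Lemma upper1 : upper 1. Proof. by rewrite /upper imR1. Qed.
Lemma upperN1 : upper (-1). Proof. by rewrite /upper imRN imR1 oppr0. Qed.

Lemma normC1_real z : `|z| = 1 -> imR z = 0 -> z = 1 \/ z = -1.
Proof.
move=> z1 im0; have := normC1_reR_imR z1; rewrite im0 expr0n addr0 => /eqP.
rewrite sqrf_eq1 => /orP[]/eqP re1; [left | right]; apply: reR_imR_inj;
  by rewrite ?re1 ?im0 ?reRN ?imRN ?reR1 ?imR1 ?oppr0.
Qed.

Lemma normC1_reR_lt1 z : `|z| = 1 -> z != 1 -> reR z < 1.
Proof.
move=> z1 zn1; have := normC1_reR_imR z1; rewrite lt_neqAle => h.
apply/andP; split; last by nra.
apply/eqP => re1; have /eqP : imR z ^+ 2 = 0 by rewrite re1 in h; lra.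
rewrite expf_eq0 /= => /eqP /(normC1_real z1) [] ez; rewrite ez in re1 zn1.
  by rewrite eqxx in zn1.
by move: re1; rewrite reRN reR1; lra.
Qed.

Lemma normC1_reR_gtN1 z : `|z| = 1 -> z != -1 -> -1 < reR z.
Proof.
move=> z1 zn1; have := normC1_reR_imR z1; rewrite lt_neqAle => h.
apply/andP; split; last by nra.
apply/eqP => re1; have /eqP : imR z ^+ 2 = 0 by rewrite -re1 in h; lra.
rewrite expf_eq0 /= => /eqP /(normC1_real z1) [] ez; rewrite ez in re1 zn1.
  by move: re1; rewrite reR1; lra.
by rewrite eqxx in zn1.
Qed.

Lemma normC1_reR_bound z : `|z| = 1 -> -1 <= reR z <= 1.
Proof. by move=> /normC1_reR_imR h; apply/andP; split; nra. Qed.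

Lemma upper_reR_inj x y : `|x| = 1 -> `|y| = 1 -> upper x -> upper y ->
  reR x = reR y -> x = y.
Proof.
move=> x1 y1 ux uy eq_re; apply: reR_imR_inj => //.
have /eqP : imR x ^+ 2 = imR y ^+ 2.
  by have := normC1_reR_imR x1; have := normC1_reR_imR y1; rewrite eq_re; lra.
by rewrite eqrXn2 // => /eqP.
Qed.

Lemma normC1_inv (z : algC) : `|z| = 1 -> z^-1 = z^*.
Proof. by move=> z1; rewrite invC_norm z1 expr1n invr1 mul1r. Qed.

Lemma imR_divC1 x y : `|y| = 1 -> imR (x / y) = imR x * reR y - reR x * imR y.
Proof. by move=> y1; rewrite normC1_inv // imRM reRJ imRJ; ring. Qed.

Lemma reR_mul_lt a e : `|a| = 1 -> `|e| = 1 -> upper a -> upper e ->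
  e != 1 -> a != -1 -> upper (a * e) -> reR (a * e) < reR a.
Proof.
move=> a1 e1 ua ue en1 an1; rewrite /upper imRM reRM => uae.
have ha := normC1_reR_imR a1; have hc := normC1_reR_imR e1.
have c1 := normC1_reR_lt1 e1 en1; have ar1 := normC1_reR_gtN1 a1 an1.
move: ua ue uae ha hc c1 ar1; rewrite /upper.
move: (reR a) (imR a) (reR e) (imR e) => ar ai c s hai hs h ha hc hc1 har.
have [ar0|ar0] := lerP 0 ar.
  have [s0|s0] := eqVneq s 0.
    subst s; have ceq : c = -1 \/ c = 1 by nra.
    by case: ceq => ce; subst c; nra.
  have sp : 0 < s by rewrite lt_def s0.
  have [ar00|arp] := eqVneq ar 0.
    subst ar; have aip : 0 < ai by nra.
    have : 0 < ai * s by apply: mulr_gt0.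
    lra.
  have : 0 < ar * (1 - c) by apply: mulr_gt0; rewrite ?lt_def ?arp; lra.
  have : 0 <= ai * s by apply: mulr_ge0.
  lra.
have aip : 0 < ai by nra.
have c0 : 0 <= c by nra.
have sp : 0 < s by nra.
have : ai * (1 + c) > - ar * s by nra.
have : ai * s * s > - ar * (1 - c) * s by nra.
nra.
Qed.

Lemma reR_lt_oppM a e : `|a| = 1 -> `|e| = 1 -> (0 : algR) < imR a -> upper e ->
  imR (a * e) < 0 -> reR e < reR (- (a * e)).
Proof.
move=> a1 e1; rewrite /upper reRN reRM opprB imRM.
have := normC1_reR_imR a1; have := normC1_reR_imR e1.
move: (reR a) (imR a) (reR e) (imR e) => ar ai c s hc ha hai hs h.
have ar1 : -1 < ar by nra.
have [c0|c0] := lerP c 0.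
  have [c00|cn] := eqVneq c 0.
    subst c; have sp : 0 < s by nra.
    have : 0 < ai * s by apply: mulr_gt0.
    lra.
  have : 0 <= ai * s by apply: mulr_ge0; lra.
  have : 0 < - c * (1 + ar) by apply: mulr_gt0; rewrite ?oppr_gt0 ?lt_def ?cn; lra.
  lra.
have arn : ar < 0 by nra.
have sp : 0 < s by nra.
nra.
Qed.

Lemma upper_divC1 a g : `|a| = 1 -> `|g| = 1 -> upper a -> upper g ->
  reR g <= reR a -> upper (g / a).
Proof.
move=> a1 g1; rewrite /upper imR_divC1 //.
have := normC1_reR_imR a1; have := normC1_reR_imR g1.
move: (reR a) (imR a) (reR g) (imR g) => ar ai gr gi hg ha hai hgi h.
have [ar0|ar0] := lerP 0 ar.
  have [gr0|gr0] := lerP 0 gr; last by nra.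
  have : ai <= gi by nra.
  nra.
have : gi <= ai by nra.
nra.
Qed.

Lemma reR_lt_of_imR_div x y : `|x| = 1 -> `|y| = 1 -> upper x -> upper y ->
  (0 : algR) < imR (y / x) -> reR y < reR x.
Proof.
move=> x1 y1 ux uy lt0; rewrite ltNge; apply/negP => /(upper_divC1 y1 x1 uy ux).
rewrite /upper imR_divC1 // -oppr_le0.
by move: lt0; rewrite imR_divC1 //; lra.
Qed.

Lemma imR_divC1_eq0 x y : `|x| = 1 -> `|y| = 1 -> imR (y / x) = 0 -> y = x \/ y = - x.
Proof.
move=> x1 y1 im0; have x0 : x != 0 by rewrite -normr_eq0 x1 oner_eq0.
have yx1 : `|y / x| = 1 by rewrite normrM normfV x1 y1 invr1 mulr1.
by case: (normC1_real yx1 im0) => /(canRL (divfK x0)) ->; rewrite ?mul1r ?mulN1r; [left|right].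
Qed.

(** * Roots of unity on the upper half circle *)

Lemma oppC1_neq1 : (-1 : algC) != 1.
Proof. by rewrite -subr_eq0 -opprD oppr_eq0 -mulr2n pnatr_eq0. Qed.

Lemma normC_unity_root (z : algC) n : (0 < n)%N -> z ^+ n = 1 -> `|z| = 1.
Proof.
move=> n_gt0 /(congr1 Num.norm); rewrite normrX normr1 => /eqP.
by rewrite pexpr_eq1 ?normr_ge0 -?lt0n // => /eqP.
Qed.

Lemma upper_prim_root_exists n : (0 < n)%N -> exists2 z, n.-primitive_root z & upper z.
Proof.
move=> n_gt0; have [xi prim_xi] := C_prim_root_exists n_gt0.
have [u_xi|nu_xi] := boolP (upper xi); first by exists xi.
exists xi^*; first by rewrite fmorph_primitive_root.
by rewrite /upper imRJ oppr_ge0 ltW // ltNge.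
Qed.

(* [eta] is the [2N]-th root of unity of smallest positive argument. *)
Definition first_root (N : nat) (eta : algC) :=
  [/\ eta ^+ (2 * N) = 1, upper eta, eta != 1 &
      forall g : algC, g ^+ (2 * N) = 1 -> upper g -> g != 1 -> reR g <= reR eta].

Lemma first_root_exists N : (0 < N)%N -> exists eta, first_root N eta.
Proof.
move=> N_gt0; have N2_gt0 : (0 < 2 * N)%N by rewrite muln_gt0.
have [xi xi_prim] := C_prim_root_exists N2_gt0.
have xiN : xi ^+ N = -1.
  have : (xi ^+ N) ^+ 2 == 1 by rewrite -exprM mulnC prim_expr_order.
  rewrite sqrf_eq1 => /orP[|/eqP //].
  rewrite -(prim_order_dvd xi_prim) => /dvdn_leq; rewrite N_gt0 => /(_ isT).
  by rewrite leqNgt -{1}(mul1n N) ltn_mul2r N_gt0.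
have N_lt : (N < 2 * N)%N by rewrite -{1}(mul1n N) ltn_mul2r N_gt0.
pose P := [pred i : 'I_(2 * N) | upper (xi ^+ i) && (xi ^+ i != 1)].
have PN : P (Ordinal N_lt) by rewrite /P /= xiN upperN1 oppC1_neq1.
case: (arg_maxP (fun i : 'I_(2 * N) => reR (xi ^+ i)) PN) => i /andP[ui ni] maxi.
exists (xi ^+ i); split=> //.
  by rewrite -exprM mulnC exprM (prim_expr_order xi_prim) expr1n.
move=> g g1 ug ng; have [j gj] := prim_rootP xi_prim g1.
by rewrite gj in ug ng *; apply: maxi; rewrite /P /= ug ng.
Qed.

Section FirstRoot.

Variables (N : nat) (eta : algC).
Hypotheses (N_gt0 : (0 < N)%N) (eta_first : first_root N eta).

Let N2_gt0 : (0 < 2 * N)%N. Proof. by rewrite muln_gt0. Qed.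

Lemma normC_first_root : `|eta| = 1.
Proof. by case: eta_first => eta2N _ _ _; apply: normC_unity_root eta2N. Qed.

Lemma normC_first_root_pow j : `|eta ^+ j| = 1.
Proof. by rewrite normrX normC_first_root expr1n. Qed.

Lemma first_root_pow_upper_decr i : (forall j, (j < i)%N -> eta ^+ j != -1) ->
  (forall j, (j <= i)%N -> upper (eta ^+ j)) /\
  (forall j, (j < i)%N -> reR (eta ^+ j.+1) < reR (eta ^+ j)).
Proof.
have [eta2N ueta eta_n1 eta_max] := eta_first; have eta1 := normC_first_root.
elim: i => [|i IHi] nopp.
  by split=> // j; rewrite leqn0 => /eqP ->; rewrite expr0 upper1.
have [IHu IHd] := IHi (fun j lt_ji => nopp j (leqW lt_ji)).
set a := eta ^+ i; have ua : upper a := IHu i (leqnn i).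
have a_n1 : a != -1 := nopp i (ltnSn i).
have a1 : `|a| = 1 := normC_first_root_pow i.
have uae : upper (a * eta).
  have [->|a_neq1] := eqVneq a 1; first by rewrite mul1r.
  have ima : (0 : algR) < imR a.
    rewrite lt_def; apply/andP; split=> //; apply/eqP => /(normC1_real a1) [] ea.
      by rewrite ea eqxx in a_neq1.
    by rewrite ea eqxx in a_n1.
  (* otherwise [- (a * eta)] is an upper root with larger real part than [eta] *)
  rewrite /upper leNgt; apply/negP => imae.
  have := reR_lt_oppM a1 eta1 ima ueta imae; apply/negP; rewrite -leNgt.
  apply: eta_max.
  - by rewrite exprM sqrrN -exprM exprMn eta2N mulr1 /a -exprM mulnC exprM eta2N expr1n.
  - by rewrite /upper imRN oppr_ge0 ltW.
  - by apply/eqP => /(congr1 imR); rewrite imRN imR1; lra.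
split=> j.
  by rewrite leq_eqVlt => /orP[/eqP->|]; [rewrite exprSr | rewrite ltnS; exact: IHu].
rewrite ltnS leq_eqVlt => /orP[/eqP->|]; last exact: IHd.
by rewrite exprSr; apply: reR_mul_lt.
Qed.

Lemma first_root_pow_reR_decr i : (forall j, (j < i)%N -> eta ^+ j != -1) ->
  forall j k, (j < k <= i)%N -> reR (eta ^+ k) < reR (eta ^+ j).
Proof.
move=> nopp; have [_ decr] := first_root_pow_upper_decr nopp.
move=> j; elim=> // k IHk /andP[lt_jk le_ki].
rewrite ltnS leq_eqVlt in lt_jk; case/orP: lt_jk => [/eqP-> | lt_jk].
  exact: decr.
by apply: lt_trans (decr k le_ki) (IHk _); rewrite lt_jk ltnW.
Qed.

Lemma first_root_opp_exists : exists m, eta ^+ m == -1.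
Proof.
have [/existsP[j ej]|no_opp] := boolP [exists j : 'I_(2 * N).+1, eta ^+ j == -1].
  by exists j.
have [eta2N _ _ _] := eta_first.
have nopp j : (j < 2 * N)%N -> eta ^+ j != -1.
  by move=> lt_j; apply: contra no_opp => ej; apply/existsP; exists (Ordinal (leqW lt_j)).
have := first_root_pow_reR_decr nopp (j := 0) (k := 2 * N).
by rewrite N2_gt0 leqnn eta2N expr0 ltxx => /(_ isT).
Qed.

Let m := ex_minn first_root_opp_exists.

Let eta_m : eta ^+ m = -1.
Proof. by rewrite /m; case: ex_minnP => m' /eqP. Qed.

Let nopp_m j : (j < m)%N -> eta ^+ j != -1.
Proof.
rewrite /m; case: ex_minnP => m' _ min_m' lt_j.
by apply/negP => /min_m'; rewrite leqNgt lt_j.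
Qed.

Let m_gt0 : (0 < m)%N.
Proof. by rewrite lt0n; apply: contra_eqN eta_m => /eqP->; rewrite expr0 eq_sym oppC1_neq1. Qed.

Let upper_pow j : (j <= m)%N -> upper (eta ^+ j).
Proof. exact: (first_root_pow_upper_decr nopp_m).1. Qed.

Let reR_pow_decr j k : (j < k <= m)%N -> reR (eta ^+ k) < reR (eta ^+ j).
Proof. exact: first_root_pow_reR_decr. Qed.

Let pow_neq1 j : (0 < j < 2 * m)%N -> eta ^+ j != 1.
Proof.
case/andP=> j_gt0 lt_j; have [le_jm|lt_mj] := leqP j m.
  have := reR_pow_decr (j := 0) (k := j); rewrite j_gt0 le_jm expr0 => /(_ isT).
  by apply: contraTneq => ->; rewrite ltxx.
rewrite -(subnKC (ltnW lt_mj)) exprD eta_m mulN1r eqr_oppLR nopp_m //.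
by rewrite ltn_subLR ?(ltnW lt_mj) // addnn -mul2n.
Qed.

Let prim_2m : (2 * m).-primitive_root eta.
Proof.
have m2_gt0 : (0 < 2 * m)%N by rewrite muln_gt0.
have eta2m : eta ^+ (2 * m) = 1 by rewrite mulnC exprM eta_m sqrrN expr1n.
have [k prim_k dvd_k] := prim_order_exists m2_gt0 eta2m.
have := dvdn_leq m2_gt0 dvd_k; rewrite leq_eqVlt => /orP[/eqP <- // | lt_k].
by have := @pow_neq1 k; rewrite (prim_order_gt0 prim_k) lt_k prim_expr_order // eqxx => /(_ isT).
Qed.

Let root_between i g : (i < m)%N -> g ^+ (2 * N) = 1 -> upper g ->
  reR g <= reR (eta ^+ i) -> reR (eta ^+ i.+1) < reR g -> g = eta ^+ i.
Proof.
have [eta2N ueta eta_n1 eta_max] := eta_first; have eta1 := normC_first_root.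
move=> lt_im g2N ug le_g lt_g; have g1 := normC_unity_root N2_gt0 g2N.
set a := eta ^+ i in le_g *; have a1 : `|a| = 1 := normC_first_root_pow i.
have a0 : a != 0 by rewrite -normr_eq0 a1 oner_eq0.
set d := g / a; have gd : g = d * a by rewrite /d divfK.
have [d_eq1|d_neq1] := eqVneq d 1; first by rewrite gd d_eq1 mul1r.
have d1 : `|d| = 1 by rewrite normrM normfV g1 a1 invr1 mulr1.
have ud : upper d := upper_divC1 a1 g1 (upper_pow (ltnW lt_im)) ug le_g.
have d2N : d ^+ (2 * N) = 1.
  by rewrite exprMn exprVn g2N /a -exprM mulnC exprM eta2N expr1n invr1 mulr1.
have ae1 : `|a * eta| = 1 by rewrite normrM a1 eta1 mulr1.
have uae : upper (a * eta) by rewrite /a -exprSr upper_pow.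
(* [d] is an upper root with argument at most that of [eta] *)
have := upper_divC1 eta1 d1 ueta ud (eta_max d d2N ud d_neq1).
have -> : d / eta = g / (a * eta) by rewrite /d invfM mulrA.
rewrite /upper le_eqVlt => /orP[/eqP/esym/(imR_divC1_eq0 ae1 g1) [] g_ae | im_gt0].
- by move: lt_g; rewrite g_ae /a exprSr ltxx.
- have d_eta : d = - eta by rewrite /d g_ae mulNr mulrC mulKf.
  have im_eta : imR eta = 0.
    by apply/le_anti/andP; split=> //; move: ud; rewrite /upper d_eta imRN oppr_ge0.
  case: (normC1_real eta1 im_eta) => eta_pm; first by rewrite eta_pm eqxx in eta_n1.
  by move: d_neq1; rewrite d_eta eta_pm opprK eqxx.
- have := reR_lt_of_imR_div ae1 g1 uae ug im_gt0.
  by rewrite /a -exprSr => /(lt_trans lt_g); rewrite ltxx.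
Qed.

Let upper_root_pow g : g ^+ (2 * N) = 1 -> upper g ->
  exists2 i, (i <= m)%N & g = eta ^+ i.
Proof.
move=> g2N ug; have g1 := normC_unity_root N2_gt0 g2N.
have [ge_g1 le_g1] := andP (normC1_reR_bound g1).
pose P i := (i <= m)%N && (reR g <= reR (eta ^+ i)).
have P0 : exists i, P i by exists 0%N; rewrite /P leq0n expr0 reR1 le_g1.
have P_le i : P i -> (i <= m)%N by case/andP.
case: (ex_maxnP P0 P_le) => i /andP[]; rewrite leq_eqVlt => /orP[/eqP-> | lt_im] le_g max_i.
  exists m => //; apply: (upper_reR_inj g1 (normC_first_root_pow m) ug (upper_pow _)) => //.
  by apply/le_anti; rewrite le_g eta_m reRN reR1 ge_g1.
exists i; first exact: ltnW.
apply: root_between => //; rewrite ltNge; apply/negP => le_g'.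
by have := max_i i.+1; rewrite /P lt_im le_g' ltnn => /(_ isT).
Qed.

Let m_eq_N : m = N.
Proof.
have [eta2N _ _ _] := eta_first.
have [xi prim_xi u_xi] := upper_prim_root_exists N2_gt0.
have [i _ xi_i] := upper_root_pow (prim_expr_order prim_xi) u_xi.
have : (2 * m == 2 * N)%N.
  rewrite eqn_dvd (prim_order_dvd prim_2m) eta2N eqxx (prim_order_dvd prim_xi) xi_i.
  by rewrite -exprM mulnC exprM (prim_expr_order prim_2m) expr1n eqxx.
by rewrite eqn_pmul2l // => /eqP.
Qed.

Lemma first_root_spec :
  [/\ eta ^+ N = -1, (2 * N).-primitive_root eta,
      forall j, (j <= N)%N -> upper (eta ^+ j),
      forall j k, (j < k <= N)%N -> reR (eta ^+ k) < reR (eta ^+ j) &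
      forall g, g ^+ (2 * N) = 1 -> upper g -> exists2 i, (i <= N)%N & g = eta ^+ i].
Proof.
have roots g : g ^+ (2 * N) = 1 -> upper g -> exists2 i, (i <= N)%N & g = eta ^+ i.
  by rewrite -{2}m_eq_N; apply: upper_root_pow.
by split=> //; rewrite -m_eq_N.
Qed.

End FirstRoot.

Lemma first_root_uniq N e1 e2 : (0 < N)%N -> first_root N e1 -> first_root N e2 -> e1 = e2.
Proof.
move=> N_gt0 e1_first e2_first.
have [r1 u1 n1 max1] := e1_first; have [r2 u2 n2 max2] := e2_first.
apply: (upper_reR_inj (normC_first_root N_gt0 e1_first) (normC_first_root N_gt0 e2_first)) => //.
by apply/le_anti; rewrite max1 ?max2.
Qed.

Lemma rootCN1_first_root N : (0 < N)%N -> first_root N (N.-root (-1)).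
Proof.
move=> N_gt0; have [eta eta_first] := first_root_exists N_gt0.
have [_ u_eta _ eta_max] := eta_first.
set w := N.-root (-1); have wN : w ^+ N = -1 := rootCK N_gt0 (-1).
have w2N : w ^+ (2 * N) = 1 by rewrite mulnC exprM wN sqrrN expr1n.
have u_w : upper w.
  have [N_eq1|N_neq1] := eqVneq N 1%N; first by rewrite /w N_eq1 root1C upperN1.
  by apply: Im_rootC_ge0; rewrite ltn_neqAle eq_sym N_neq1.
have w_neq1 : w != 1 by apply: contra_eqN wN => /eqP->; rewrite expr1n eq_sym oppC1_neq1.
have w1 : `|w| = 1 by apply: (normC_unity_root _ w2N); rewrite muln_gt0.
suff -> : w = eta by [].
apply: (upper_reR_inj w1 (normC_first_root N_gt0 eta_first) u_w u_eta).
have [etaN _ _ _ _] := first_root_spec N_gt0 eta_first.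
by apply/le_anti; rewrite eta_max //=; exact: (rootC_Re_max N_gt0 etaN u_eta).
Qed.

Lemma rootCN1_pow m d : (0 < m)%N -> (0 < d)%N ->
  ((m * d).-root (-1 : algC)) ^+ m = d.-root (-1).
Proof.
move=> m_gt0 d_gt0; have md_gt0 : (0 < m * d)%N by rewrite muln_gt0 m_gt0.
have eta_first := rootCN1_first_root md_gt0.
set eta := (m * d).-root (-1) in eta_first *.
have [_ prim_eta upper_pow decr roots] := first_root_spec md_gt0 eta_first.
apply: (first_root_uniq d_gt0 _ (rootCN1_first_root d_gt0)).
have le_m : (m <= m * d)%N by rewrite leq_pmulr.
split.
- by rewrite -exprM mulnCA prim_expr_order.
- exact: upper_pow.
- rewrite -(prim_order_dvd prim_eta); apply/negP => /(dvdn_leq m_gt0); apply/negP.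
  by rewrite -ltnNge (leq_ltn_trans le_m) // -[X in (X < _)%N]mul1n ltn_mul2r md_gt0.
move=> g g2d ug g_neq1.
have [|i le_i g_i] := roots g _ ug; first by rewrite mulnCA mulnC exprM g2d expr1n.
have i_gt0 : (0 < i)%N by rewrite lt0n; apply: contra_neq g_neq1 => i0; rewrite g_i i0.
have : (2 * d * m %| 2 * d * i)%N.
  by rewrite -mulnA (mulnC d m) (prim_order_dvd prim_eta) mulnC exprM -g_i g2d.
rewrite dvdn_pmul2l ?muln_gt0 // => /(dvdn_leq i_gt0).
rewrite leq_eqVlt => /orP[/eqP-> | lt_mi]; first by rewrite g_i.
by rewrite g_i ltW // decr // lt_mi le_i.
Qed.

(** * The character [expi] of [Q/Z] *)

(* [zeta d = exp (2 pi i / d)], so that [expi q = zeta (denq q) ^ numq q]. *)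
Definition zeta (d : nat) : algC := (d.-root (-1 : algC)) ^+ 2.

Lemma zetaXn m d : (0 < m)%N -> (0 < d)%N -> zeta (m * d) ^+ m = zeta d.
Proof. by move=> m_gt0 d_gt0; rewrite /zeta exprAC rootCN1_pow. Qed.

Lemma zeta_prim d : (0 < d)%N -> d.-primitive_root (zeta d).
Proof.
move=> d_gt0; have [_ prim _ _ _] := first_root_spec d_gt0 (rootCN1_first_root d_gt0).
have := exp_prim_root prim 2.
have -> : gcdn 2 (2 * d) = 2%N by rewrite gcdnC; apply/gcdn_idPr; apply: dvdn_mulr.
by rewrite mulKn.
Qed.

Lemma zeta1 : zeta 1 = 1.
Proof. by rewrite /zeta root1C sqrrN expr1n. Qed.

Lemma zeta_neq0 d : (0 < d)%N -> zeta d != 0.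
Proof. by move=> d_gt0; rewrite (prim_root_eq0 (zeta_prim d_gt0)) -lt0n. Qed.

Lemma absz_denq_gt0 q : (0 < `|denq q|)%N.
Proof. by rewrite absz_gt0 denq_neq0. Qed.

Lemma abszE_denq q : (`|denq q|%N)%:Z = denq q.
Proof. by rewrite abszE gtr0_norm // denq_gt0. Qed.

Lemma expi_frac (a : int) (b : nat) : (0 < b)%N -> expi (a%:~R / b%:R) = zeta b ^ a.
Proof.
move=> b_gt0; set q := a%:~R / b%:R; rewrite /expi -/(zeta _).
set d := `|denq q|%N; set n := numq q.
have cross : n * b%:Z = a * d%:Z.
  apply: (@intr_inj rat); rewrite !rmorphM /= /n numqE /d abszE_denq /q.
  have b_neq0 : (b%:R : rat) != 0 by rewrite pnatr_eq0 -lt0n.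
  have den_neq0 : ((denq (a%:~R / b%:R))%:~R : rat) != 0 by rewrite intr_eq0 denq_neq0.
  rewrite -[((b : int)%:~R : rat)]/(b%:R : rat).
  by field.
set Z := zeta (d * b).
have Zb : zeta b = Z ^+ d by rewrite /Z zetaXn ?absz_denq_gt0.
have Zd : zeta d = Z ^+ b by rewrite /Z mulnC zetaXn ?absz_denq_gt0.
by rewrite Zb Zd !exprnP !exprz_exp [b%:Z * n]mulrC cross mulrC.
Qed.

Lemma divq_num_den_mul q d : (0 < d)%N -> q = (numq q * d%:Z)%:~R / (`|denq q| * d)%:R.
Proof.
move=> d_gt0; have d_neq0 : (d%:R : rat) != 0 by rewrite pnatr_eq0 -lt0n.
have den_neq0 : ((`|denq q|)%:R : rat) != 0 by rewrite pnatr_eq0 -lt0n absz_denq_gt0.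
rewrite -{1}(divq_num_den q) -abszE_denq rmorphM natrM /=.
rewrite -[((d%:Z)%:~R : rat)]/(d%:R : rat) -[((`|denq q|%N%:Z)%:~R : rat)]/(`|denq q|%:R : rat).
by field; rewrite den_neq0 d_neq0.
Qed.

Lemma expiD p q : expi (p + q) = expi p * expi q.
Proof.
set b := `|denq p|%N; set d := `|denq q|%N.
have b_gt0 : (0 < b)%N := absz_denq_gt0 p; have d_gt0 : (0 < d)%N := absz_denq_gt0 q.
have Dp := divq_num_den_mul p d_gt0; have Dq := divq_num_den_mul q b_gt0; rewrite mulnC in Dp.
have Dpq : p + q = (numq p * d%:Z + numq q * b%:Z)%:~R / (d * b)%:R.
  by rewrite {1}Dp {1}Dq rmorphD /= mulrDl.
have db_gt0 : (0 < d * b)%N by rewrite muln_gt0 d_gt0.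
by rewrite Dpq [in expi p]Dp [in expi q]Dq !expi_frac // exprzDr // unitfE zeta_neq0.
Qed.

Lemma expi_int (n : int) : expi n%:~R = 1.
Proof. by rewrite /expi -/(zeta _) numq_int denq_int zeta1 exp1rz. Qed.

Lemma expi_neq0 q : expi q != 0.
Proof. by rewrite /expi -/(zeta _) expfz_neq0 ?zeta_neq0 ?absz_denq_gt0. Qed.

Lemma expi_eq1 q : expi q = 1 -> q \is a Num.int.
Proof.
rewrite /expi -/(zeta _); set d := `|denq q|%N; set n := numq q => zeta_n.
have prim_d := zeta_prim (absz_denq_gt0 q).
have d_dvd_n : (d %| `|n|)%N.
  rewrite (prim_order_dvd prim_d); move: zeta_n; rewrite /n.
  case: (numq q) => k /=; first by rewrite -exprnP => ->.
  by move=> /eqP; rewrite invr_eq1 => /eqP ->.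
have := coprime_num_den q; rewrite -/d -/n /coprime => /eqP.
by rewrite (gcdn_idPr d_dvd_n) Qint_def -abszE_denq -/d => ->.
Qed.

Lemma expi_eqQZ p q : expi p = expi q -> eqQZ p q.
Proof.
move=> epq; apply: expi_eq1; apply: (mulIf (expi_neq0 q)).
by rewrite -expiD subrK mul1r.
Qed.

(** * Automorphisms of [algC] on roots of unity *)

(* The exponent by which [nu] acts on [n]-th roots of unity (junk value [1] for [n = 0]). *)
Definition aut_exp (nu : {rmorphism algC -> algC}) (n : nat) : nat :=
  odflt 1%N (omap (@nat_of_ord n) [pick i : 'I_n | nu (zeta n) == zeta n ^+ i]).

Section AutExp.

Variable nu : {rmorphism algC -> algC}.

Lemma aut_expP n : (0 < n)%N -> nu (zeta n) = zeta n ^+ aut_exp nu n.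
Proof.
move=> n_gt0; rewrite /aut_exp; case: pickP => [i /eqP // | no_i].
have prim_n := zeta_prim n_gt0.
have nu_n : nu (zeta n) ^+ n = 1 by rewrite -rmorphXn prim_expr_order ?rmorph1.
have [i nu_i] := prim_rootP prim_n nu_n.
by have := no_i i; rewrite nu_i eqxx.
Qed.

Lemma aut_exp_coprime n : (0 < n)%N -> coprime (aut_exp nu n) n.
Proof.
move=> n_gt0; rewrite -(prim_root_exp_coprime _ (zeta_prim n_gt0)) -aut_expP //.
by rewrite fmorph_primitive_root zeta_prim.
Qed.

Lemma aut_exp_compat m n : (0 < n)%N -> (0 < m)%N -> (n %| m)%N ->
  aut_exp nu m = aut_exp nu n %[mod n].
Proof.
move=> n_gt0 m_gt0 n_dvd_m; apply/eqP.
have zeta_n : zeta n = zeta m ^+ (m %/ n).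
  by rewrite -[in zeta m](divnK n_dvd_m) zetaXn // divn_gt0 // dvdn_leq.
have : nu (zeta n) = zeta n ^+ aut_exp nu m.
  by rewrite {1}zeta_n rmorphXn aut_expP // -exprM mulnC exprM -zeta_n.
by rewrite aut_expP // => /eqP; rewrite (eq_prim_root_expr (zeta_prim n_gt0)) eq_sym.
Qed.

Lemma zhat_unit_aut_exp : zhat_unit (fun n => (aut_exp nu n)%:Z).
Proof.
split=> [n n_gt0 | m n n_gt0 m_gt0 n_dvd_m].
  by rewrite /coprimez /gcdz /= (eqP (aut_exp_coprime n_gt0)).
by rewrite !modz_nat eqz_nat (aut_exp_compat n_gt0 m_gt0 n_dvd_m).
Qed.

Lemma expi_aut q : nu (expi q) = expi (zhat_act (fun n => (aut_exp nu n)%:Z) q).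
Proof.
have d_gt0 := absz_denq_gt0 q.
have den_q : ((denq q)%:~R : rat) = (`|denq q|%N)%:R by rewrite -[in LHS]abszE_denq.
rewrite /zhat_act den_q expi_frac // /expi -/(zeta _) fmorphXz aut_expP //.
by rewrite exprnP exprz_exp.
Qed.

End AutExp.

(** * Eigenvalues under automorphisms *)

Lemma char_poly_similar (F : fieldType) n (M A : 'M[F]_n) : M \in unitmx ->
  char_poly (M *m A *m invmx M) = char_poly A.
Proof.
move=> M_unit; rewrite /char_poly.
set Mp := map_mx polyC M; set Mi := map_mx polyC (invmx M).
have MMi : Mp *m Mi = 1%:M by rewrite -map_mxM mulmxV // map_mx1.
have -> : char_poly_mx (M *m A *m invmx M) = Mp *m char_poly_mx A *m Mi.
  rewrite /char_poly_mx !map_mxM -/Mp -/Mi mulmxBr mulmxBl.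
  by rewrite mul_mx_scalar -scalemxAl MMi scalemx1.
by rewrite !det_mulmx mulrAC -det_mulmx MMi det1 mul1r.
Qed.

Lemma prod_XsubC_perm (F : fieldType) n (u v : 'I_n -> F) :
  \prod_(j < n) ('X - (u j)%:P) = \prod_(j < n) ('X - (v j)%:P) ->
  exists p : 'S_n, forall j, u j = v (p j).
Proof.
have tupleE w : \prod_(j < n) ('X - (w j)%:P) = \prod_(x <- [tuple w j | j < n]) ('X - x%:P).
  by rewrite big_tuple; apply: eq_bigr => j _; rewrite tnth_mktuple.
rewrite !tupleE => /prod_XsubC_eq /tuple_permP[p /val_inj uvp].
by exists p => j; have := congr1 (fun t : n.-tuple F => tnth t j) uvp; rewrite !tnth_mktuple.
Qed.

Lemma eigen_exps_aut (K : fieldExtType rat) n (rho : {rmorphism K -> 'M[rat]_n})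
    (chi0 chi : {rmorphism K -> algC}) (nu : {rmorphism algC -> algC})
    (T : 'M[rat]_n) (a0 a : 'I_2 -> rat) :
  (forall x, nu (chi0 x) = chi x) -> eigen_exps rho chi0 T a0 -> eigen_exps rho chi T a ->
  exists p : 'S_2, forall j, nu (expi (a0 j)) = expi (a (p j)).
Proof.
move=> nu_chi [B0 [A0 [B0_chi0 B0_free B0_T A0_char]]] [B [A [B_chi B_free B_T A_char]]].
have nu_ratr p q (M : 'M[rat]_(p, q)) : map_mx nu (map_mx ratr M) = map_mx ratr M.
  by apply/matrixP => i j; rewrite !mxE fmorph_rat.
set B0' := map_mx nu B0; set A0' := map_mx nu A0.
have B0'_sub : (B0' <= B)%MS.
  apply/row_subP => i; apply/B_chi => x; rewrite -map_row.
  have /(congr1 (map_mx nu)) := (B0_chi0 (row i B0)).1 (row_sub i B0) x.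
  by rewrite map_mxM map_mxZ nu_ratr nu_chi.
set M := B0' *m pinvmx B; have MB : M *m B = B0' by apply: mulmxKpV.
have M_unit : M \in unitmx.
  rewrite -row_free_unit /row_free eqn_leq rank_leq_row /=.
  have rank_B0' : \rank B0' = 2%N by rewrite mxrank_map; apply/eqP.
  by rewrite -{1}rank_B0' -MB mxrankM_maxl.
have B0'_T : B0' *m map_mx ratr T = A0' *m B0'.
  by rewrite -(nu_ratr _ _ T) -map_mxM B0_T map_mxM.
have MA : M *m A = A0' *m M.
  by apply: (row_free_inj B_free); rewrite -mulmxA -B_T mulmxA MB B0'_T -MB mulmxA.
have char_A0' : char_poly A0' = char_poly A.
  by rewrite -[A0'](mulmxK M_unit) -MA char_poly_similar.
apply: (@prod_XsubC_perm _ _ (fun j => nu (expi (a0 j))) (fun j => expi (a j))).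
rewrite -A_char -char_A0' -map_char_poly A0_char rmorph_prod.
by apply: eq_bigr => j _; rewrite /= map_polyXsubC.
Qed.

(** * Characters of the group algebra *)

Lemma algC_conj_aut_exists (z w : algC) :
  (forall q : {poly rat}, (map_poly ratr q).[z] = 0 -> (map_poly ratr q).[w] = 0) ->
  exists nu : {rmorphism algC -> algC}, nu z = w.
Proof.
move=> zw_rel; have [p [Dp p_monic] _] := minCpolyP z.
set P := map_poly ratr p : {poly algC}.
have Pz : P.[z] = 0 by apply/eqP; rewrite -/(root P z) /P -Dp root_minCpoly.
have [r Dr] := closed_field_poly_normal P.
rewrite /P lead_coef_map (monicP p_monic) rmorph1 scale1r -/P in Dr.
have [Qs [QsC [r1 Dr1 Qs_gen]]] := num_field_exists r.
have QsC_rat (a : rat) : QsC (in_alg Qs a) = ratr a.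
  by rewrite /= alg_num_field fmorph_rat.
have p_split : map_poly (in_alg Qs) p = \prod_(y <- r1) ('X - y%:P).
  apply: (@map_poly_inj _ _ QsC); rewrite -map_poly_comp rmorph_prod /=.
  rewrite (eq_map_poly QsC_rat) -/P Dr -Dr1 big_map.
  by apply: eq_bigr => y _; rewrite map_polyXsubC.
have Qs_split : FieldExt_isSplittingField _ Qs.
  constructor; exists (map_poly (in_alg Qs) p); first by apply/polyOver1P; exists p.
  by exists r1; rewrite ?p_split ?eqpxx ?Qs_gen.
pose L := HB.pack_for (splittingFieldType rat) Qs Qs_split.
have root_in_L (y : algC) : P.[y] = 0 -> exists y1 : L, QsC y1 = y.
  move=> Py; have : y \in r by rewrite -root_prod_XsubC -Dr /root Py.
  by rewrite -Dr1 => /mapP[y1 _ ->]; exists y1.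
have [z1 Dz] := root_in_L z Pz; have [w1 Dw] := root_in_L w (zw_rel p Pz).
have w1_conj : root (minPoly 1 z1) w1.
  have /polyOver1P[q Dq] := minPolyOver 1 z1.
  have qz : (map_poly ratr q).[z] = 0.
    have := root_minPoly 1 z1; rewrite Dq => /eqP /(congr1 QsC).
    by rewrite rmorph0 -Dz -horner_map /= -map_poly_comp (eq_map_poly QsC_rat).
  have := zw_rel q qz; rewrite Dq /root -Dw -(eq_map_poly QsC_rat) map_poly_comp horner_map.
  by move/eqP; rewrite fmorph_eq0.
have [x _ x_z1] := normalField_root_minPoly (sub1v _) (normalFieldf 1) (memvf z1) w1_conj.
have [nu Dnu] := extend_algC_subfield_aut QsC x.
by exists nu; rewrite -Dz -Dnu -Dw; congr (QsC _); exact: x_z1.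
Qed.

Section GroupAlgebra.

Variables (K : fieldExtType rat) (l : nat).
Hypothesis l_gt0 : (0 < l)%N.

Section Character.

Variables (k : 'I_l) (chi : {rmorphism K -> algC}).

Lemma eps_chi_is_zmod_morphism : zmod_morphism (eps_chi k chi).
Proof.
move=> x y; rewrite /eps_chi -sumrB; apply: eq_bigr => g _.
by rewrite !ffunE rmorphB mulrBl.
Qed.

HB.instance Definition _ :=
  GRing.isZmodMorphism.Build _ _ (eps_chi k chi) eps_chi_is_zmod_morphism.

Lemma eps_chiZ (c : rat) x : eps_chi k chi (c *: x) = ratr c * eps_chi k chi x.
Proof.
rewrite /eps_chi mulr_sumr; apply: eq_bigr => g _.
by rewrite ffunE rmorphZ_num mulrA.
Qed.

End Character.

Definition gdelta (g : 'I_l) (a : K) : {ffun 'I_l -> K} :=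
  [ffun h => if h == g then a else 0].

Lemma eps_chi_gdelta k chi g a : eps_chi k chi (gdelta g a) = chi a * expi ((g * k)%:R / l%:R).
Proof.
rewrite /eps_chi (bigD1 g) //= big1 ?addr0 => [|h h_neq_g]; first by rewrite ffunE eqxx.
by rewrite ffunE (negbTE h_neq_g) rmorph0 mul0r.
Qed.

Lemma expi_mod_l (k g h : nat) :
  expi ((((g + h) %% l) * k)%:R / l%:R) = expi ((g * k)%:R / l%:R) * expi ((h * k)%:R / l%:R).
Proof.
have l_neq0 : (l%:R : rat) != 0 by rewrite pnatr_eq0 -lt0n.
rewrite -expiD -mulrDl -natrD -mulnDl {2}(divn_eq (g + h) l) mulnDl natrD mulrDl.
by rewrite mulnAC (natrM _ ((g + h) %/ l * k) l) mulfK // expiD (expi_int ((g + h) %/ l * k)%:Z) mul1r.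
Qed.

Definition gadd (g h : 'I_l) : 'I_l := Ordinal (ltn_pmod (g + h) l_gt0).

Definition gconv (x y : {ffun 'I_l -> K}) : {ffun 'I_l -> K} :=
  \sum_(g < l) \sum_(h < l) gdelta (gadd g h) (x g * y h).

Definition gone : {ffun 'I_l -> K} := gdelta (Ordinal l_gt0) 1.

Lemma eps_chi_gconv k chi x y :
  eps_chi k chi (gconv x y) = eps_chi k chi x * eps_chi k chi y.
Proof.
rewrite raddf_sum {2}/eps_chi mulr_suml; apply: eq_bigr => g _.
rewrite raddf_sum mulr_sumr; apply: eq_bigr => h _.
by rewrite /= eps_chi_gdelta expi_mod_l rmorphM mulrACA.
Qed.

Lemma eps_chi_gone k chi : eps_chi k chi gone = 1.
Proof. by rewrite eps_chi_gdelta rmorph1 mul1r /= mul0n mul0r (expi_int 0). Qed.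

Lemma eps_chi_poly (k0 k : 'I_l) (chi0 chi : {rmorphism K -> algC}) x0 (q : {poly rat}) :
  exists y, eps_chi k0 chi0 y = (map_poly ratr q).[eps_chi k0 chi0 x0] /\
            eps_chi k chi y = (map_poly ratr q).[eps_chi k chi x0].
Proof.
elim/poly_ind: q => [|q c [y [y0 y1]]].
  by exists 0; rewrite !raddf0 !horner0.
exists (gconv y x0 + c *: gone).
rewrite !raddfD /= !eps_chiZ !eps_chi_gconv !eps_chi_gone y0 y1 rmorphM /=.
by rewrite map_polyX map_polyC !hornerMXaddC mulr1.
Qed.

End GroupAlgebra.

(* Equal kernels make [eps_chi k0 chi0 y |-> eps_chi k chi y] a well-defined ring map on a
   number field, which extends to [algC] from a primitive element. *)
Lemma same_factor_aut (K : fieldExtType rat) l (l_gt0 : (0 < l)%N) (k0 k : 'I_l)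
    (chi0 chi : {rmorphism K -> algC}) (ys : seq {ffun 'I_l -> K}) :
  same_factor (eps_chi k0 chi0) (eps_chi k chi) ->
  exists nu : {rmorphism algC -> algC},
    forall y, y \in ys -> nu (eps_chi k0 chi0 y) = eps_chi k chi y.
Proof.
move=> same_ker.
have ker y : eps_chi k0 chi0 y = 0 -> eps_chi k chi y = 0 := (same_ker y).1.
have [z [a Dz] [ps Dps]] := algC_PET (map (eps_chi k0 chi0) ys).
set x0 := \sum_(i < size (map (eps_chi k0 chi0) ys)) ys`_i *+ a i.
have x0_z : eps_chi k0 chi0 x0 = z.
  rewrite Dz /x0 raddf_sum; apply: eq_bigr => i _.
  by rewrite raddfMn /= (nth_map 0) // -(size_map (eps_chi k0 chi0)).
have poly_eps q : exists y, eps_chi k0 chi0 y = (map_poly ratr q).[z] /\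
                            eps_chi k chi y = (map_poly ratr q).[eps_chi k chi x0].
  by rewrite -x0_z; apply: eps_chi_poly.
have [nu nu_z] : exists nu : {rmorphism algC -> algC}, nu z = eps_chi k chi x0.
  apply: algC_conj_aut_exists => q qz; have [y [y0 y1]] := poly_eps q.
  by rewrite -y1; apply: ker; rewrite y0.
exists nu => y /(nthP 0)[i lt_i <-].
have [y' [y'0 y'1]] := poly_eps ps`_i.
have eps0_i : eps_chi k0 chi0 ys`_i = (map_poly ratr ps`_i).[z].
  have size_ps : size ps = size ys by rewrite -(size_map (eps_chi k0 chi0)) Dps size_map.
  by rewrite -(nth_map 0 0 (eps_chi k0 chi0) lt_i) Dps (nth_map 0) // size_ps.
have /eqP : eps_chi k chi (ys`_i - y') = 0 by apply: ker; rewrite raddfB /= eps0_i y'0 subrr.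
rewrite raddfB subr_eq0 /= => /eqP ->; rewrite eps0_i y'1 -nu_z.
by rewrite -horner_map -map_poly_comp; congr (_.[_]); apply: eq_map_poly => c /=; rewrite fmorph_rat.
Qed.

Lemma same_factor_aut_gen (K : fieldExtType rat) l (l_gt0 : (0 < l)%N) (k0 k : 'I_l)
    (chi0 chi : {rmorphism K -> algC}) :
  same_factor (eps_chi k0 chi0) (eps_chi k chi) ->
  exists nu : {rmorphism algC -> algC},
    (forall x, nu (chi0 x) = chi x) /\ nu (expi (k0%:R / l%:R)) = expi (k%:R / l%:R).
Proof.
pose g0 : 'I_l := Ordinal l_gt0; pose g1 : 'I_l := Ordinal (ltn_pmod 1 l_gt0).
pose basis := vbasis {:K}.
move=> /(same_factor_aut l_gt0 (gdelta g1 1 :: [seq gdelta g0 b | b <- basis]))[nu nu_eps].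
exists nu; split=> [x|].
  have nu_basis b : b \in basis -> nu (chi0 b) = chi b.
    move=> b_basis; have := nu_eps (gdelta g0 b); rewrite inE map_f ?orbT // => /(_ isT).
    by rewrite !eps_chi_gdelta /= !mul0n !mul0r (expi_int 0) !mulr1.
  rewrite (coord_vbasis (memvf x)) !rmorph_sum; apply: eq_bigr => i _.
  by rewrite !rmorphZ_num rmorphM fmorph_rat nu_basis // mem_nth ?size_tuple.
have g1_mul (j : nat) : (j < l)%N -> (g1 * j)%N = j.
  move=> lt_jl; have [l_le1|l_gt1] := leqP l 1%N; last by rewrite /= modn_small ?mul1n.
  have j0 : j = 0%N by apply/eqP; rewrite -leqn0 -ltnS (leq_trans lt_jl l_le1).
  by rewrite j0 muln0.
have := nu_eps (gdelta g1 1); rewrite inE eqxx => /(_ isT).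
by rewrite !eps_chi_gdelta !g1_mul // !rmorph1 !mul1r.
Qed.

Theorem lemma3p1
  (K : fieldExtType rat) (n : nat) (rho : {rmorphism K -> 'M[rat]_n})
  (T0 T1 Tinf : 'M[rat]_n)
  (alpha beta : {rmorphism K -> algC} -> 'I_2 -> rat)
  (rank2 : n = (2 * \dim {:K})%N)
  (T0u : T0 \in unitmx) (T1u : T1 \in unitmx) (Tinfu : Tinf \in unitmx)
  (T0c : forall x : K, T0 *m rho x = rho x *m T0)
  (T1c : forall x : K, T1 *m rho x = rho x *m T1)
  (Tinfc : forall x : K, Tinf *m rho x = rho x *m Tinf)
  (T1unip : (T1 - 1%:M) ^+ n = 0)
  (T1rk : (\rank (logU T1) * 2)%N = n)
  (halpha : forall chi, eigen_exps rho chi T0 (alpha chi))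
  (hbeta : forall chi, eigen_exps rho chi Tinf (beta chi))
  (l : nat) (hl : (0 < l)%N) (k0 k : 'I_l) (chi0 chi : {rmorphism K -> algC})
  (hI : same_factor (eps_chi k0 chi0) (eps_chi k chi)) :
  exists s : nat -> int, zhat_unit s /\
    exists (sa sb : 'S_2), forall j : 'I_2,
      eqQZ (zhat_act s (k0%:R / l%:R + alpha chi0 j)) (k%:R / l%:R + alpha chi (sa j)) /\
      eqQZ (zhat_act s (k0%:R / l%:R + beta chi0 j)) (k%:R / l%:R + beta chi (sb j)).
Proof.
have [nu [nu_chi nu_zeta_l]] := same_factor_aut_gen hl hI.
have [sa nu_alpha] := eigen_exps_aut nu_chi (halpha chi0) (halpha chi).
have [sb nu_beta] := eigen_exps_aut nu_chi (hbeta chi0) (hbeta chi).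
exists (fun n => (aut_exp nu n)%:Z); split; first exact: zhat_unit_aut_exp.
exists sa, sb => j; split; apply: expi_eqQZ;
  by rewrite -expi_aut !expiD rmorphM nu_zeta_l ?nu_alpha ?nu_beta.
Qed.
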